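(* Let $F_1,F_2:X\rightrightarrows Y$ be upper $K$-convex set-valued maps whose values are all $K$-sequentially compact. Suppose that $F_1$ (or $F_2$) is continuous at some point of $X$, or that $X$ is finite dimensional. Then for every $\bar x\in X$ and every $y^*\in K^+\setminus\{0\}$, $$y^*\big(\widehat\partial(F_1+F_2)(\bar x)\big)\subset\widehat\partial(y^*\circ F_1)(\bar x)+\widehat\partial(y^*\circ F_2)(\bar x).$$
   Context: $X,Y$ are real normed spaces with duals $X^*,Y^*$; $B(X,Y)$ is the space of bounded linear operators $X\to Y$; $B(x,\delta)$ is the open ball and $D_Y$ the closed unit ball. $K\subset Y$ is a pointed closed convex cone and $K^+=\{y^*\in Y^*: y^*(k)\ge0\ \forall k\in K\}$. All set-valued maps have nonempty values; $(F_1+F_2)(x)=F_1(x)+F_2(x)$. For $F:X\rightrightarrows Y$ and $\bar x\in X$, $\widehat\partial F(\bar x)$ is the set of all $T\in B(X,Y)$ such that for every $\varepsilon>0$ there is $\delta>0$ with $F(x)+K\subset F(\bar x)+K+T(x-\bar x)+\varepsilon\|x-\bar x\|D_Y$ for all $x\in B(\bar x,\delta)$; this is also applied to maps $G:X\rightrightarrows\mathbb R$ with $Y=\mathbb R$, $K=[0,\infty)$ (so $\widehat\partial G(\bar x)\subset X^*$). For $y^*\in Y^*$, $y^*\circ F$ is $x\mapsto\{y^*(y):y\in F(x)\}$, and for $\mathcal T\subset B(X,Y)$, $y^*(\mathcal T)=\{y^*\circ T:T\in\mathcal T\}$. $F$ is upper $K$-convex if $\lambda F(x)+(1-\lambda)F(y)\subset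 F(\lambda x+(1-\lambda)y)+K$ for all $x,y\in X$, $\lambda\in(0,1)$. A nonempty $A\subset Y$ is $K$-sequentially compact if for every $(a_n)\subset A$ there is $(c_n)\subset K$ such that $(a_n-c_n)$ has a subsequence converging to an element of $A$. $F$ is continuous at $x$ if it is both lower continuous (for every open $V$ with $F(x)\cap V\ne\emptyset$ there is a neighborhood $U$ of $x$ with $F(u)\cap V\neq\emptyset$ for $u\in U$) and upper continuous (for every open $V\supset F(x)$ there is a neighborhood $U$ of $x$ with $F(u)\subset V$ for $u\in U$) at $x$. *)

From HB Require Import structures.
From mathcomp Require Import all_boot all_order all_algebra.
From mathcomp Require Import all_classical all_reals all_analysis.
Set Implicit Arguments. Unset Strict Implicit. Unset Printing Implicit Defensive.
Import Order.TTheory GRing.Theory Num.Theory.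
Import numFieldNormedType.Exports.
Local Open Scope classical_set_scope.
Local Open Scope ring_scope.

Section Defs.
Context {R : realType}.

Definition blin {X Y : normedModType R} (T : X -> Y) : Prop :=
  (forall x y, T (x + y) = T x + T y) /\
  (forall (a : R) x, T (a *: x) = a *: T x) /\ continuous T.

Definition pointed_closed_convex_cone {Y : normedModType R} (K : set Y) : Prop :=
  closed K /\ K 0 /\ (forall k t, K k -> 0 <= t -> K (t *: k)) /\
  (forall k1 k2, K k1 -> K k2 -> K (k1 + k2)) /\
  (forall k, K k -> K (- k) -> k = 0).

Definition dual_cone {Y : normedModType R} (K : set Y) : set (Y -> R) :=
  [set ys : Y -> R | blin ys /\ forall k, K k -> 0 <= ys k].

Definition smap_add {X Y : normedModType R} (F1 F2 : X -> set Y) : X -> set Y :=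
  fun x => [set y | exists a b, F1 x a /\ F2 x b /\ y = a + b].

Definition scomp {X Y : normedModType R} (ys : Y -> R) (F : X -> set Y) : X -> set R :=
  fun x => ys @` F x.

(* Frechet-type subdifferential \hat\partial F(xb) w.r.t. the cone K:
   T in B(X,Y) s.t. for every eps>0 there is delta>0 with
   F(x)+K \subset F(xb)+K+T(x-xb)+eps||x-xb|| D_Y for all x in B(xb,delta) *)
Definition hatsub {X Y : normedModType R} (K : set Y) (F : X -> set Y) (xb : X)
  : set (X -> Y) :=
  [set T | blin T /\
    forall eps : R, 0 < eps -> exists2 delta : R, 0 < delta &
      forall x, `|x - xb| < delta ->
        forall y k, F x y -> K k ->
          exists y' k' b, F xb y' /\ K k' /\ `|b| <= 1 /\
            y + k = y' + k' + T (x - xb) + (eps * `|x - xb|) *: b].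

Definition Rplus_cone : set R := [set r | 0 <= r].

Definition upper_Kconvex {X Y : normedModType R} (K : set Y) (F : X -> set Y) : Prop :=
  forall x y (l : R), 0 < l < 1 -> forall a b, F x a -> F y b ->
    exists c k, F (l *: x + (1 - l) *: y) c /\ K k /\
      l *: a + (1 - l) *: b = c + k.

Definition Kseq_compact {Y : normedModType R} (K : set Y) (A : set Y) : Prop :=
  A !=set0 /\
  forall a : nat -> Y, (forall n, A (a n)) ->
    exists c : nat -> Y, (forall n, K (c n)) /\
      exists phi : nat -> nat, {homo phi : m n / (m < n)%N >-> (m < n)%N} /\
        exists2 l, A l & (fun n => a (phi n) - c (phi n)) @ \oo --> l.

Definition lower_cont {X Y : normedModType R} (F : X -> set Y) (x : X) : Prop :=
  forall V : set Y, open V -> F x `&` V !=set0 ->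
    exists2 U, nbhs x U & forall u, U u -> F u `&` V !=set0.
Definition upper_cont {X Y : normedModType R} (F : X -> set Y) (x : X) : Prop :=
  forall V : set Y, open V -> F x `<=` V ->
    exists2 U, nbhs x U & forall u, U u -> F u `<=` V.
Definition smap_cont {X Y : normedModType R} (F : X -> set Y) (x : X) : Prop :=
  lower_cont F x /\ upper_cont F x.

Definition findim (X : normedModType R) : Prop :=
  exists (n : nat) (e : 'I_n -> X),
    forall x, exists c : 'I_n -> R, x = \sum_(i < n) c i *: e i.

End Defs.

(* As the values of [F_i] are [K]-sequentially
   compact, [ys] attains its minimum [f_i x] on [F_i x], and upper
   [K]-convexity makes [f_i] convex. Applying [ys] to the inclusion defining
   [T] shows that [ys \o T] is a Frechet subgradient of [f_1 + f_2] at [xb],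
   hence a global one by convexity. A Hahn-Banach sandwich argument splits it
   as [g_1 + g_2] with [g_i] a global subgradient of [f_i]; the [g_i] are
   continuous because [f_i] is bounded above near a point of lower continuity
   of [F_i], or because [X] is finite dimensional. Finally [F_i x] lies in
   [f_i x + [0, oo)], so a global subgradient of [f_i] lies in the
   subdifferential of [ys \o F_i]. *)

From HB Require Import structures.
From mathcomp Require Import all_boot all_order all_algebra.
From mathcomp Require Import all_classical all_reals all_analysis.
From mathcomp Require Import ring lra.
Import Order.TTheory GRing.Theory Num.Theory.
Import numFieldNormedType.Exports.
Set Implicit Arguments. Unset Strict Implicit. Unset Printing Implicit Defensive.
Local Open Scope classical_set_scope.
Local Open Scope ring_scope.

Lemma scaleRE (R : realType) (a b : R) : a *: b = a * b.
Proof. by []. Qed.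

Section ConvexFunctions.
Variables (R : realType) (X : lmodType R).

Definition convex_fun (f : X -> R) := forall x y (t : R), 0 < t < 1 ->
  f (t *: x + (1 - t) *: y) <= t * f x + (1 - t) * f y.

Definition subgradient (f : X -> R) (xb : X) (g : X -> R) :=
  forall x, f xb + g (x - xb) <= f x.

Lemma convex_funD (f g : X -> R) :
  convex_fun f -> convex_fun g -> convex_fun (f \+ g).
Proof. by move=> fc gc x y t t01 /=; have := fc x y t t01; have := gc x y t t01; lra. Qed.

End ConvexFunctions.

Section HahnBanach.
Variables (R : realType) (X : lmodType R) (Phi : X -> X -> R).
Hypothesis Phi_convex : forall t : R, 0 < t < 1 -> forall u v u' v',
  Phi (t *: u + (1 - t) *: u') (t *: v + (1 - t) *: v')
    <= t * Phi u v + (1 - t) * Phi u' v'.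
Hypothesis Phi0_ge0 : forall v, 0 <= Phi 0 v.

(* Graphs of partial linear forms dominated by [Phi]. *)
Definition hb_admissible (G : set (X * R)) :=
  [/\ (forall c p q, G p -> G q -> G (c *: p.1 + q.1, c * p.2 + q.2)),
      (forall r, G (0, r) -> r = 0) &
      (forall p, G p -> forall v, p.2 <= Phi p.1 v)].

Lemma hb_admissible_bigcup (F : set (set (X * R))) :
  F `<=` hb_admissible -> total_on F subset ->
  hb_admissible (\bigcup_(A in F) A).
Proof.
move=> FP Ftot; split.
- move=> c p q [A FA Ap] [B FB Bq].
  have [AB|BA] := Ftot _ _ FA FB.
  + by exists B => //; have [+ _ _] := FP _ FB; apply => //; exact: AB.
  + by exists A => //; have [+ _ _] := FP _ FA; apply => //; exact: BA.
- by move=> r [A FA Ar]; have [_ + _] := FP _ FA; apply.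
- by move=> p [A FA Ap]; have [_ _ +] := FP _ FA; apply.
Qed.

(* The lower bounds that [A] forces on the value at a new direction [u0] lie
   below the upper bounds, so that value can be chosen in between. *)
Lemma hb_admissible_gap (A : set (X * R)) u0 : hb_admissible A -> A (0, 0) ->
  forall u r t v u' r' s v', A (u, r) -> A (u', r') -> 0 < t -> 0 < s ->
  (r' - Phi (u' - s *: u0) v') / s <= (Phi (u + t *: u0) v - r) / t.
Proof.
move=> [Acl _ Adom] A0 u r t v u' r' s v' Aur Aur' t0 s0.
have st0 : 0 < s + t by rewrite addr_gt0.
pose lam := s / (s + t).
have lam01 : 0 < lam < 1 by rewrite divr_gt0 //= ltr_pdivrMr // mul1r ltrDl.
have e1 : 1 - lam = t / (s + t) by rewrite /lam; field; rewrite gt_eqF.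
have Aq : A ((1 - lam) *: u' + 0, (1 - lam) * r' + 0).
  exact: (Acl _ (u', r') (0, 0)).
have := Adom _ (Acl lam (u, r) _ Aur Aq) (lam *: v + (1 - lam) *: v') => /=.
have -> : lam *: u + ((1 - lam) *: u' + 0) =
    lam *: (u + t *: u0) + (1 - lam) *: (u' - s *: u0).
  rewrite addr0 !scalerDr !scalerN !scalerA.
  have -> : lam * t = (1 - lam) * s by rewrite e1 /lam; field; rewrite gt_eqF.
  by rewrite addrACA subrr addr0 addrC.
move=> /le_trans /(_ (Phi_convex lam01 _ _ _ _)); rewrite addr0 e1 /lam => H.
have H2 : s * r + t * r' <= s * Phi (u + t *: u0) v + t * Phi (u' - s *: u0) v'.
  have E a b : s / (s + t) * a + t / (s + t) * b = (s * a + t * b) / (s + t).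
    by field; rewrite gt_eqF.
  by move: H; rewrite !E ler_pM2r ?invr_gt0.
rewrite ler_pdivrMr // mulrAC ler_pdivlMr // !mulrBl; nra.
Qed.

Lemma hb_admissible_add_line (A : set (X * R)) u0 (a : R) :
  hb_admissible A -> A (0, 0) -> ~ (exists r, A (u0, r)) ->
  (forall u r s v, A (u, r) -> 0 < s -> (r - Phi (u - s *: u0) v) / s <= a) ->
  (forall u r t v, A (u, r) -> 0 < t -> a <= (Phi (u + t *: u0) v - r) / t) ->
  hb_admissible [set p | exists u r t, A (u, r) /\ p = (u + t *: u0, r + t * a)].
Proof.
move=> [Acl Afun Adom] A0 nA a_ge a_le; split.
- move=> c _ _ [u [r [t [Aur ->]]]] [u' [r' [t' [Aur' ->]]]] /=.
  exists (c *: u + u'), (c * r + r'), (c * t + t').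
  split; first exact: (Acl c (u, r) (u', r')).
  congr (_, _); last by ring.
  by rewrite !scalerDr !scalerA scalerDl addrACA.
- move=> r0 [u [r [t [Aur [e1 e2]]]]].
  have [t0|tn0] := eqVneq t 0.
    move: e1 e2; rewrite t0 scale0r mul0r !addr0 => e1 e2.
    by rewrite e2; apply: Afun; rewrite e1.
  exfalso; apply: nA; exists (- t^-1 * r + 0).
  have := Acl (- t^-1) (u, r) (0, 0) Aur A0; congr A; congr (_, _) => /=.
  have -> : u = - (t *: u0) by apply/eqP; rewrite -addr_eq0 e1.
  by rewrite addr0 scalerN scalerA mulNr scaleNr opprK mulVf // scale1r.
- move=> _ [u [r [t [Aur ->]]]] v /=.
  have [tn|t0|t0] := ltgtP t 0.
  + have := a_ge u r (- t) v Aur; rewrite oppr_gt0 scaleNr opprK => /(_ tn).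
    by rewrite ler_pdivrMr ?oppr_gt0 // mulrN mulrC; lra.
  + by have := a_le u r t v Aur t0; rewrite ler_pdivlMr // mulrC; lra.
  + by rewrite t0 scale0r mul0r !addr0; apply: (Adom (u, r)).
Qed.

Lemma hb_admissible_extend (A : set (X * R)) u0 : hb_admissible A -> A (0, 0) ->
  ~ (exists r, A (u0, r)) -> exists B, hb_admissible B /\ A `<` B.
Proof.
move=> Ag A0 nA; have gap := hb_admissible_gap u0 Ag A0.
pose L := [set x | exists u r s v, [/\ A (u, r), 0 < s &
  x = (r - Phi (u - s *: u0) v) / s]].
have L0 : L !=set0 by exists ((0 - Phi (0 - 1 *: u0) 0) / 1); exists 0, 0, 1, 0.
have Lub : ubound L ((Phi (0 + 1 *: u0) 0 - 0) / 1).
  by move=> x [u [r [s [v [Aur s0 ->]]]]]; exact: gap.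
exists [set p | exists u r t, A (u, r) /\ p = (u + t *: u0, r + t * sup L)]; split.
  apply: hb_admissible_add_line => // u r s v Aur s0.
    by apply: ub_le_sup; [eexists; exact: Lub | exists u, r, s, v].
  by apply: ge_sup => // _ [u' [r' [s' [v' [Aur' s'0 ->]]]]]; exact: gap.
split; first by move=> [u r] Aur; exists u, r, 0; rewrite scale0r mul0r !addr0.
move=> /(_ (u0, sup L)) BA; apply: nA; exists (sup L); apply: BA.
by exists 0, 0, 1; rewrite scale1r mul1r !add0r.
Qed.

Lemma hahn_banach_jointly_convex :
  exists l : {linear X -> R}, forall u v, l u <= Phi u v.
Proof.
have [A [Ag Amax]] := Zorn_bigcup hb_admissible_bigcup.
have [Acl Afun Adom] := Ag.
have A0 : A (0, 0).
  have [[p Ap]|Ae] := pselect (A !=set0).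
    by have := Acl (-1) p p Ap Ap; rewrite scaleN1r mulN1r !addNr.
  exfalso; apply: (Amax [set (0, 0)]).
    split; first by move=> p Ap; exfalso; apply: Ae; exists p.
    by move=> H; apply: Ae; exists (0, 0); exact: H.
  split.
  - by move=> c _ _ -> -> /=; rewrite scaler0 mulr0 !addr0.
  - by move=> r [].
  - by move=> _ -> v /=.
have Atot u : exists r, A (u, r).
  apply: contrapT => nA.
  by have [B [Bg AB]] := hb_admissible_extend Ag A0 nA; exact: Amax AB Bg.
pose l u := projT1 (cid (Atot u)).
have Al u : A (u, l u) by exact: projT2 (cid (Atot u)).
have l_linear : linear l.
  move=> c u u'; have := Acl c _ _ (Al u) (Al u') => /= Ac.
  have := Acl (-1) _ _ (Al (c *: u + u')) Ac => /=.
  rewrite scaleN1r addNr mulN1r => /Afun /eqP.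
  by rewrite [X in X == 0]addrC subr_eq0 => /eqP.
pose L : {linear X -> R} := HB.pack l (GRing.isLinear.Build _ _ _ _ l l_linear).
by exists L => u v; exact: (Adom (u, l u)).
Qed.

End HahnBanach.

Lemma convex_sandwich (R : realType) (X : lmodType R) (h1 h2 : X -> R) :
  convex_fun h1 -> convex_fun h2 -> h1 0 = 0 -> h2 0 = 0 ->
  (forall u, 0 <= h1 u + h2 u) ->
  exists l : {linear X -> R}, (forall u, l u <= h1 u) /\ (forall u, - l u <= h2 u).
Proof.
move=> h1c h2c h10 h20 h12.
pose Phi u v := h1 (u + v) + h2 v.
have Phi_convex t : 0 < t < 1 -> forall u v u' v',
    Phi (t *: u + (1 - t) *: u') (t *: v + (1 - t) *: v')
      <= t * Phi u v + (1 - t) * Phi u' v'.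
  move=> t01 u v u' v'; rewrite /Phi addrACA -!scalerDr.
  by have := h1c (u + v) (u' + v') t t01; have := h2c v v' t t01; lra.
have Phi0_ge0 v : 0 <= Phi 0 v by rewrite /Phi add0r.
have [l hl] := hahn_banach_jointly_convex Phi_convex Phi0_ge0.
exists l; split=> u.
- by have := hl u 0; rewrite /Phi addr0 h20 addr0.
- by have := hl (- u) u; rewrite /Phi addNr h10 add0r linearN.
Qed.

Lemma subgradient_sum_split (R : realType) (X : lmodType R) (f1 f2 : X -> R)
    (g : {linear X -> R}) xb :
  convex_fun f1 -> convex_fun f2 -> subgradient (f1 \+ f2) xb g ->
  exists l : {linear X -> R},
    subgradient f1 xb (g \+ l) /\ subgradient f2 xb (\- l).
Proof.
move=> f1c f2c f12g.
pose h1 u := f1 (xb + u) - f1 xb - g u.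
pose h2 u := f2 (xb + u) - f2 xb.
have shift t u v : xb + (t *: u + (1 - t) *: v) = t *: (xb + u) + (1 - t) *: (xb + v).
  by rewrite !scalerDr addrACA -scalerDl subrKC scale1r.
have h1c : convex_fun h1.
  move=> u v t t01; rewrite /h1 shift [g _]linearD ![g (_ *: _)]linearZ_LR !scaleRE.
  by have := f1c (xb + u) (xb + v) t t01; lra.
have h2c : convex_fun h2.
  by move=> u v t t01; rewrite /h2 shift; have := f2c (xb + u) (xb + v) t t01; lra.
have h10 : h1 0 = 0 by rewrite /h1 addr0 linear0 !subrr.
have h20 : h2 0 = 0 by rewrite /h2 addr0 subrr.
have h12 u : 0 <= h1 u + h2 u.
  by have := f12g (xb + u); rewrite [xb + u - xb]addrC addKr /= /h1 /h2; lra.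
have [l [lh1 lh2]] := convex_sandwich h1c h2c h10 h20 h12.
exists l; split=> x; have := lh1 (x - xb); have := lh2 (x - xb);
  by rewrite /h1 /h2 subrKC /=; lra.
Qed.

Section LinearFormContinuity.
Variables (R : realType) (X : normedModType R).

Lemma linear_ub_continuous (l : {linear X -> R}) (d B : R) : 0 < d ->
  (forall u, `|u| < d -> l u <= B) -> continuous l.
Proof.
move=> d0 lB; apply: bounded_linear_continuous; apply/ex_bound; exists B.
apply/nbhs_norm0P; exists d => //= u /= ud; rewrite ler_norml lB // andbT.
by rewrite lerNl -linearN lB // normrN.
Qed.

Lemma linear_bound_continuous (l : {linear X -> R}) (C : R) :
  (forall u, `|l u| <= C * `|u|) -> continuous l.
Proof.
move=> lC; apply: (@linear_ub_continuous _ 1 `|C|) => // u u1.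
apply: le_trans (ler_norm _) (le_trans (lC u) _).
apply: le_trans (ler_wpM2r (normr_ge0 _) (ler_norm C)) _.
by rewrite ler_piMr // ltW.
Qed.

Lemma continuous_linear_bound (l : {linear X -> R}) : continuous l ->
  exists C : R, forall u, `|l u| <= C * `|u|.
Proof.
move=> /linear_bounded_continuous /linear_boundedP [M [_ lM]].
by exists (M + 1); apply: lM; rewrite ltrDl.
Qed.

End LinearFormContinuity.

Lemma blinP (R : realType) (X Y : normedModType R) (f : X -> Y) :
  blin f <-> exists2 L : {linear X -> Y}, continuous L & f = L.
Proof.
split=> [[fD [fZ fc]]|[L Lc ->]]; last first.
  by split; [exact: linearD | split; [exact: linearZ_LR | exact: Lc]].
have flin : linear f by move=> a u v; rewrite fD fZ.
pose L : {linear X -> Y} := HB.pack f (GRing.isLinear.Build _ _ _ _ f flin).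
by exists L.
Qed.

Section NormedSubgradients.
Variables (R : realType) (X : normedModType R).

Lemma subgradient_continuous (f : X -> R) xb (h : {linear X -> R}) x0 (d B : R) :
  0 < d -> (forall x, `|x0 - x| < d -> f x <= B) -> subgradient f xb h ->
  continuous h.
Proof.
move=> d0 fB hsub.
apply: (@linear_ub_continuous _ _ h d (B - f xb - h (x0 - xb))) => // u ud.
have := hsub (x0 + u); have := fB (x0 + u).
rewrite opprD addNKr normrN => /(_ ud).
by rewrite addrAC [h _]linearD; lra.
Qed.

(* Along the segment from [xb] to [x], convexity transports the local estimate
   at scale [t * `|x - xb|] back to [x], where the error [eps] can be made
   arbitrarily small. *)
Lemma convex_local_subgradient (f : X -> R) (g : {linear X -> R}) xb :
  convex_fun f ->
  (forall eps, 0 < eps -> exists2 d : R, 0 < d & forall x, `|x - xb| < d ->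
     f xb + g (x - xb) - eps * `|x - xb| <= f x) ->
  subgradient f xb g.
Proof.
move=> fc floc x; have [->|xxb] := eqVneq x xb; first by rewrite subrr linear0 addr0.
have N0 : 0 < `|x - xb| by rewrite normr_gt0 subr_eq0.
rewrite -lerBrDl; apply/ler_addgt0Pr => eps e0.
have [d d0 fd] := floc (eps / `|x - xb|) (divr_gt0 e0 N0).
have dN0 : 0 < d + `|x - xb| by rewrite addr_gt0.
pose t := d / (d + `|x - xb|).
have t0 : 0 < t by rewrite divr_gt0.
have t01 : 0 < t < 1 by rewrite t0 ltr_pdivrMr // mul1r ltrDl.
pose z := t *: x + (1 - t) *: xb.
have ez : z - xb = t *: (x - xb).
  by rewrite /z scalerBl scale1r scalerBr addrA addrAC addrK.
have zd : `|z - xb| < d.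
  by rewrite ez normrZ gtr0_norm // /t mulrAC ltr_pdivrMr //; nra.
have := fd z zd; rewrite ez [g _]linearZ_LR scaleRE normrZ gtr0_norm //.
have := fc x xb t t01; rewrite -/z.
have -> : eps / `|x - xb| * (t * `|x - xb|) = t * eps.
  by rewrite mulrCA divfK ?gt_eqF.
move=> fz gz; have : t * (f xb + g (x - xb) - f x - eps) <= 0 by lra.
by rewrite pmulr_rle0 //; lra.
Qed.

End NormedSubgradients.

Section FiniteSpan.
Variables (R : realType) (X : normedModType R).

Definition linear_subspace (S : set X) :=
  S 0 /\ forall k x y, S x -> S y -> S (k *: x + y).

Definition fspan n (e : 'I_n -> X) : set X :=
  [set x | exists c : 'I_n -> R, x = \sum_(i < n) c i *: e i].

Lemma fspan_subspace n (e : 'I_n -> X) : linear_subspace (fspan e).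
Proof.
split; first by exists (fun=> 0); rewrite big1 // => i _; rewrite scale0r.
move=> k _ _ [c ->] [c' ->]; exists (fun i => k * c i + c' i).
rewrite scaler_sumr -big_split /=; apply: eq_bigr => i _.
by rewrite scalerDl scalerA.
Qed.

Lemma fspan_recl n (e : 'I_n.+1 -> X) :
  fspan e = [set x | exists t s, fspan (e \o lift ord0) s /\ x = t *: e ord0 + s].
Proof.
apply/seteqP; split=> x.
  move=> [c ->]; exists (c ord0), (\sum_(i < n) c (lift ord0 i) *: e (lift ord0 i)).
  by split; [exists (c \o lift ord0) | rewrite big_ord_recl].
move=> [t [s [[c ->] ->]]].
exists (fun i => if unlift ord0 i is Some j then c j else t).
by rewrite big_ord_recl unlift_none; congr (_ + _); apply: eq_bigr => i _; rewrite liftK.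
Qed.

Lemma closed_dist_gt0 (S : set X) e0 : closed S -> ~ S e0 ->
  exists2 d : R, 0 < d & forall s, S s -> d <= `|e0 - s|.
Proof.
move=> Scl nSe0; have : ~ closure S e0 by move=> /Scl.
move=> /existsNP [B /not_implyP [/nbhs_ballP [d d0 dB] SB]].
exists d => // s Ss; rewrite leNgt; apply/negP => es.
by apply: SB; exists s; split => //; apply: dB; rewrite -ball_normE.
Qed.

Lemma subspace_line_coef_bound (S : set X) e0 (d : R) :
  linear_subspace S -> 0 <= d ->
  (forall s, S s -> d <= `|e0 - s|) ->
  forall t s, S s -> `|t| * d <= `|t *: e0 + s|.
Proof.
move=> [S0 Slin] d0 Sd t s Ss.
have [->|t0] := eqVneq t 0; first by rewrite normr0 mul0r.
have -> : t *: e0 + s = t *: (e0 - (- t^-1 *: s)).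
  by rewrite scalerDr scalerN scalerA mulrN mulfV // scaleN1r opprK.
rewrite normrZ ler_wpM2l //; apply: Sd.
by have := Slin (- t^-1) s 0 Ss S0; rewrite addr0.
Qed.

(* The coefficient [tau x] of [e0] stays bounded as [x] tends to [z]; for a
   cluster value [t] of it, [z - t *: e0] is then a limit of points of [S]. *)
Lemma closed_subspace_add_line (S : set X) e0 (d : R) :
  closed S -> linear_subspace S ->
  0 < d -> (forall s, S s -> d <= `|e0 - s|) ->
  closed [set x | exists t s, S s /\ x = t *: e0 + s].
Proof.
move=> Scl Ssub d0 Sd; set T := [set x | _] => z clz.
pose tau x := xget 0 [set t | exists s, S s /\ x = t *: e0 + s].
have tauP x : T x -> exists2 s, S s & x = tau x *: e0 + s.
  move=> Tx; have [s [Ss ex]] := xgetPex 0 Tx; by exists s.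
have tau_bound x : T x -> `|tau x| * d <= `|x|.
  by move=> /tauP [s Ss {2}->]; exact: (subspace_line_coef_bound Ssub (ltW d0)).
pose F := within T (nbhs z).
have PF : ProperFilter F by apply: within_nbhs_proper.
pose M := (`|z| + 1) / d.
have FI : (tau @ F) `[- M, M]%classic.
  apply/nbhs_ballP; exists 1 => //= x; rewrite -ball_normE /= => zx Tx.
  rewrite in_itv /= -ler_norml /M ler_pdivlMr //; apply: le_trans (tau_bound _ Tx) _.
  have -> : x = z - (z - x) by rewrite subKr.
  by apply: le_trans (ler_normB _ _) _; rewrite lerD2l ltW.
have [t [_ clt]] := @segment_compact _ _ _ (tau @ F) _ FI.
suff Sz : S (z - t *: e0) by exists t, (z - t *: e0); split => //; rewrite addrC subrK.
apply: Scl => B /nbhs_ballP [eps eps0 epsB].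
have ne0 : 0 < `|e0| + 1 by rewrite ltr_wpDl.
pose eta := eps / 2 / (`|e0| + 1).
have eta0 : 0 < eta by rewrite /eta !divr_gt0.
pose A := [set r | exists x, [/\ T x, `|z - x| < eps / 2 & r = tau x]].
have GA : (tau @ F) A.
  apply/nbhs_ballP; exists (eps / 2); first by rewrite /= divr_gt0.
  by move=> x; rewrite -ball_normE /= => zx Tx; exists x.
have [_ [[x [Tx zx ->]] tx]] := clt A (ball t eta) GA (nbhsx_ballx t eta eta0).
have [s Ss ex] := tauP x Tx.
exists s; split => //; apply: epsB; rewrite -ball_normE /=.
have -> : z - t *: e0 - s = (z - x) + (tau x - t) *: e0.
  by rewrite {1}ex scalerBl opprD addrA (addrC (- _)) addrA subrK addrAC.
apply: le_lt_trans (ler_normD _ _) _; rewrite normrZ (splitr eps) ltr_leD //.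
move: tx; rewrite -ball_normE /= distrC => tx.
apply: le_trans (_ : eta * (`|e0| + 1) <= _); last by rewrite /eta divfK ?gt_eqF.
by apply: ler_pM => //; [exact: ltW | rewrite lerDl].
Qed.

Lemma fspan_closed n (e : 'I_n -> X) : closed (fspan e).
Proof.
elim: n e => [|n IH] e.
  have -> : fspan e = [set 0].
    apply/seteqP; split=> x; first by case=> c ->; rewrite big_ord0.
    by move=> ->; exists (fun=> 0); rewrite big_ord0.
  exact/accessible_closed_set1/hausdorff_accessible/norm_hausdorff.
have [S0 Slin] := fspan_subspace (e \o lift ord0).
rewrite fspan_recl; set S := fspan _ in S0 Slin *.
have [Se0|nSe0] := pselect (S (e ord0)).
  have -> : [set x | exists t s, S s /\ x = t *: e ord0 + s] = S.
    apply/seteqP; split=> x; first by move=> [t [s [Ss ->]]]; exact: Slin.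
    by move=> Sx; exists 0, x; rewrite scale0r add0r.
  exact: IH.
have [d d0 Sd] := closed_dist_gt0 (IH _) nSe0.
exact: closed_subspace_add_line (IH _) (fspan_subspace _) d0 Sd.
Qed.

(* The kernel of [l] is spanned by the [e i - l (e i) *: v], hence closed, and
   [v] (with [l v = 1]) keeps a positive distance from it. *)
Lemma findim_linear_continuous (l : {linear X -> R}) : findim X -> continuous l.
Proof.
move=> [n [e espan]].
have [[v lv]|l0] := pselect (exists v, l v = 1); last first.
  apply: (@linear_bound_continuous _ _ _ 0) => u; rewrite mul0r.
  have [->|lu] := eqVneq (l u) 0; first by rewrite normr0.
  by exfalso; apply: l0; exists ((l u)^-1 *: u); rewrite linearZ; exact: mulVf.
pose k i := e i - l (e i) *: v.
have ker_span x : fspan k (x - l x *: v).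
  have [c ex] := espan x; exists c.
  rewrite {1 2}ex linear_sum /= scaler_suml -sumrB; apply: eq_bigr => i _.
  by rewrite /k [l (_ *: _)]linearZ scalerBr scalerA.
have nkv : ~ fspan k v.
  have lk i : l (k i) = 0.
    rewrite /k linearB [l (_ *: v)]linearZ lv.
    by change (l (e i) - l (e i) * 1 = 0); rewrite mulr1 subrr.
  move=> [c ev]; have := oner_neq0 R; rewrite -lv ev linear_sum big1 ?eqxx // => i _.
  by rewrite [l _]linearZ_LR lk scaler0.
have [d d0 kd] := closed_dist_gt0 (fspan_closed (e := k)) nkv.
apply: (@linear_bound_continuous _ _ _ d^-1) => x.
rewrite ler_pdivlMl // mulrC.
have := subspace_line_coef_bound (fspan_subspace k) (ltW d0) kd (l x) (ker_span x).
by rewrite addrC subrK.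
Qed.

End FiniteSpan.

Section Scalarization.
Variables (R : realType) (X Y : normedModType R) (K : set Y) (ys : {linear Y -> R}).
Hypothesis ys_cont : continuous ys.
Hypothesis ysK : forall k, K k -> 0 <= ys k.

Lemma Kseq_compact_cluster (A : set Y) (a : nat -> Y) :
  Kseq_compact K A -> (forall n, A (a n)) ->
  exists2 l, A l & forall (eps : R) N, 0 < eps ->
    exists2 n, (N <= n)%N & ys l <= ys (a n) + eps.
Proof.
move=> [_ Acpt] Aa; have [c [Kc [phi [phi_incr [l Al acl]]]]] := Acpt a Aa.
exists l => // eps N eps0.
have phi_ge n : (n <= phi n)%N.
  by elim: n => // n IH; exact: leq_ltn_trans IH (phi_incr _ _ (ltnSn n)).
have ys_acl : (fun n => ys (a (phi n) - c (phi n))) @ \oo --> ys l.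
  by apply: continuous_cvg => //; exact: ys_cont.
have lt_eps : ys l - eps < ys l by rewrite ltrBlDr ltrDl.
have [N0 _ HN0] := cvgr_gt (ys l) ys_acl (ys l - eps) lt_eps.
exists (phi (maxn N N0)); first exact: leq_trans (leq_maxl N N0) (phi_ge _).
have := HN0 _ (leq_maxr N N0); have := ysK (Kc (phi (maxn N N0))).
by rewrite /= linearB /=; lra.
Qed.

Lemma Kseq_compact_lbound (A : set Y) :
  Kseq_compact K A -> has_lbound (ys @` A).
Proof.
move=> Acpt; apply: contrapT => Aunb.
have : forall n : nat, exists a, A a /\ ys a < - n%:R.
  move=> n; apply: contrapT => nlt; apply: Aunb; exists (- n%:R) => _ [a Aa <-].
  by rewrite leNgt; apply/negP => lt; apply: nlt; exists a.
move=> /choice [a Aa].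
have [l _ lcl] := Kseq_compact_cluster Acpt (fun n => (Aa n).1).
have [n Nn ln] := lcl 1 (Num.truncn (1 - ys l)).+1 ltr01.
have := (Aa n).2; have := truncnS_gt (1 - ys l).
have : (Num.truncn (1 - ys l)).+1%:R <= n%:R :> R by rewrite ler_nat.
lra.
Qed.

Lemma Kseq_compact_argmin (A : set Y) : Kseq_compact K A ->
  exists2 a, A a & forall b, A b -> ys a <= ys b.
Proof.
move=> Acpt; have [[a0 Aa0] _] := Acpt.
have Ainf : has_inf (ys @` A).
  by split; [exists (ys a0), a0 | exact: Kseq_compact_lbound].
pose m := inf (ys @` A).
have : forall n : nat, exists a, A a /\ ys a < m + n.+1%:R^-1.
  move=> n; have n_gt0 : 0 < n.+1%:R^-1 :> R by rewrite invr_gt0.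
  have [_ [a Aa <-] lt] := inf_adherent n_gt0 Ainf.
  by exists a.
move=> /choice [a Aa].
have [l Al lcl] := Kseq_compact_cluster Acpt (fun n => (Aa n).1).
exists l => // b Ab; apply/ler_addgt0Pr => e e0.
have e20 : 0 < e / 2 by rewrite divr_gt0.
have [k ke] := ltr_add_invr e20; rewrite add0r in ke.
have [n kn ln] := lcl _ k e20.
have mb : m <= ys b by apply: ge_inf; [exact: Ainf.2 | exists b].
have : n.+1%:R^-1 <= k.+1%:R^-1 :> R by rewrite lef_pV2 ?posrE // ler_nat ltnS.
have := (Aa n).2; move: ke; set i := n.+1%:R^-1; set j := k.+1%:R^-1; lra.
Qed.

Definition min_scalarization (F : X -> set Y) (f : X -> R) :=
  (forall x, exists2 a, F x a & f x = ys a) /\ (forall x b, F x b -> f x <= ys b).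

Lemma min_scalarization_exists (F : X -> set Y) :
  upper_Kconvex K F -> (forall x, Kseq_compact K (F x)) ->
  exists f, min_scalarization F f /\ convex_fun f.
Proof.
move=> Fconv Fcpt.
have /choice [m Fm] : forall x, exists a, F x a /\ forall b, F x b -> ys a <= ys b.
  by move=> x; have [a Fa amin] := Kseq_compact_argmin (Fcpt x); exists a.
exists (ys \o m); split.
  by split=> [x|x b Fb]; [exists (m x); first exact: (Fm x).1 | exact: (Fm x).2].
move=> x y t t01 /=.
have [c [k [Fc [Kk e]]]] := Fconv x y t t01 _ _ (Fm x).1 (Fm y).1.
have := (Fm _).2 _ Fc; have := ysK Kk.
have : ys (t *: m x + (1 - t) *: m y) = ys c + ys k by rewrite e linearD.
rewrite linearD !linearZ_LR !scaleRE /=; lra.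
Qed.

Lemma min_scalarization_ub_near (F : X -> set Y) (f : X -> R) x0 :
  min_scalarization F f -> lower_cont F x0 -> F x0 !=set0 ->
  exists2 d : R, 0 < d & exists B, forall x, `|x0 - x| < d -> f x <= B.
Proof.
move=> [_ flb] Flc [a Fa].
have Vopen : open (ys @^-1` [set r | r < ys a + 1]).
  by move: ys_cont => /continuousP; apply; exact: open_lt.
have FV : F x0 `&` (ys @^-1` [set r | r < ys a + 1]) !=set0.
  by exists a; split => //=; rewrite ltrDl ltr01.
have [U /nbhs_ballP [d d0 dU] FUV] := Flc _ Vopen FV.
exists d => //; exists (ys a + 1) => x x0x.
have [b [Fb Vb]] : F x `&` (ys @^-1` [set r | r < ys a + 1]) !=set0.
  by apply: FUV; apply: dU; rewrite -ball_normE.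
exact: le_trans (flb _ _ Fb) (ltW Vb).
Qed.

Lemma min_scalarization_hatsub (F : X -> set Y) (f : X -> R) xb
    (h : {linear X -> R}) :
  min_scalarization F f -> continuous h -> subgradient f xb h ->
  hatsub Rplus_cone (scomp ys F) xb h.
Proof.
move=> [fmin flb] hc hsub; split; first by apply/blinP; exists h.
move=> eps e0; exists 1 => // x _ _ k [a Fa <-] k0.
have [a' Fa' fa'] := fmin xb.
exists (ys a'), (ys a + k - ys a' - h (x - xb)), 0; split; first by exists a'.
split; first by rewrite /Rplus_cone /= in k0 *; have := hsub x; have := flb _ _ Fa; lra.
by rewrite normr0 ler01 scaler0 addr0; split=> //; lra.
Qed.

Lemma hatsub_sum_subgradient (F1 F2 : X -> set Y) (f1 f2 : X -> R) xb
    (T : {linear X -> Y}) :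
  K 0 -> min_scalarization F1 f1 -> min_scalarization F2 f2 ->
  convex_fun f1 -> convex_fun f2 ->
  hatsub K (smap_add F1 F2) xb T -> subgradient (f1 \+ f2) xb (ys \o T).
Proof.
move=> K0 [f1min f1lb] [f2min f2lb] f1c f2c [_ hT].
apply: convex_local_subgradient (convex_funD f1c f2c) _ => eps e0.
have [C ysC] := continuous_linear_bound ys_cont.
pose eps' := eps / (`|C| + 1).
have e'0 : 0 < eps' by rewrite divr_gt0 // ltr_wpDl.
have e'C : eps' * `|C| <= eps.
  rewrite mulrAC ler_pdivrMr ?ltr_wpDl // ler_wpM2l ?ltW //; lra.
have [d d0 hd] := hT _ e'0; exists d => // x xd /=.
have [a1 F1a1 ->] := f1min x; have [a2 F2a2 ->] := f2min x.
have F12 : smap_add F1 F2 x (a1 + a2) by exists a1, a2.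
have [_ [k [b [[c1 [c2 [Fc1 [Fc2 ->]]]] [Kk [b1 E]]]]]] := hd x xd _ _ F12 K0.
have ysb : - `|C| <= ys b.
  rewrite lerNl -linearN; apply: le_trans (ler_norm _) (le_trans (ysC _) _).
  rewrite normrN; apply: le_trans (ler_wpM2r (normr_ge0 _) (ler_norm C)) _.
  by rewrite ler_piMr.
have := congr1 ys E.
rewrite addr0 !linearD [ys (_ *: b)]linearZ_LR scaleRE /= => ->.
have err : - (eps * `|x - xb|) <= eps' * `|x - xb| * ys b.
  by rewrite mulrAC -mulNr ler_wpM2r //; nra.
by have := f1lb _ _ Fc1; have := f2lb _ _ Fc2; have := ysK Kk; lra.
Qed.

End Scalarization.

Theorem mainTheorem7 (R : realType) (X Y : normedModType R) (K : set Y)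
  (F1 F2 : X -> set Y) :
  pointed_closed_convex_cone K ->
  (forall x, F1 x !=set0) -> (forall x, F2 x !=set0) ->
  upper_Kconvex K F1 -> upper_Kconvex K F2 ->
  (forall x, Kseq_compact K (F1 x)) -> (forall x, Kseq_compact K (F2 x)) ->
  (exists x0, smap_cont F1 x0) \/ (exists x0, smap_cont F2 x0) \/ findim X ->
  forall (xb : X) (ys : Y -> R), dual_cone K ys -> ys <> (fun _ => 0) ->
  forall T, hatsub K (smap_add F1 F2) xb T ->
    exists g1 g2 : X -> R,
      hatsub Rplus_cone (scomp ys F1) xb g1 /\
      hatsub Rplus_cone (scomp ys F2) xb g2 /\
      ys \o T = g1 + g2.
Proof.
move=> [_ [K0 _]] F1n F2n F1c F2c F1k F2k hcont xb _ [/blinP [ys ys_cont ->] ysK].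
move=> _ T0 hT; have [/blinP [T T_cont eT] _] := hT; subst T0.
have [f1 [f1min f1c]] := min_scalarization_exists ys_cont ysK F1c F1k.
have [f2 [f2min f2c]] := min_scalarization_exists ys_cont ysK F2c F2k.
have [l [f1sub f2sub]] := subgradient_sum_split f1c f2c
  (hatsub_sum_subgradient ys_cont ysK K0 f1min f2min f1c f2c hT).
have g_cont : continuous (ys \o T).
  by move=> x; exact: continuous_comp (T_cont x) (ys_cont (T x)).
have l_cont : continuous l.
  case: hcont => [[x0 [F1lc _]]|[[x0 [F2lc _]]|Xfin]].
  - have [d d0 [B fB]] := min_scalarization_ub_near ys_cont f1min F1lc (F1n x0).
    have gl_cont := subgradient_continuous d0 fB f1sub.
    have -> : (l : X -> R) = (ys \o T \+ l) \- (ys \o T).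
      by apply/funext => x /=; rewrite addrC addKr.
    by move=> x; apply: cvgB; [exact: gl_cont | exact: g_cont].
  - have [d d0 [B fB]] := min_scalarization_ub_near ys_cont f2min F2lc (F2n x0).
    have nl_cont := subgradient_continuous d0 fB f2sub.
    have -> : (l : X -> R) = \- (\- l) by apply/funext => x /=; rewrite opprK.
    by move=> x; apply: cvgN; exact: nl_cont.
  - exact: findim_linear_continuous.
exists (ys \o T \+ l), (\- l); split; [|split].
- apply: min_scalarization_hatsub f1min _ f1sub => x.
  by apply: cvgD; [exact: g_cont | exact: l_cont].
- by apply: min_scalarization_hatsub f2min _ f2sub => x; apply: cvgN; exact: l_cont.
- by apply/funext => x /=; rewrite addrK.
Qed.
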